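(* Let $\mathcal{A}$ be a dual Banach algebra. If $\mathcal{A}$ is Connes amenable, then $\mathcal{A}$ is Johnson pseudo-Connes amenable.
   Context: A dual Banach algebra is a Banach algebra $\mathcal{A}$ together with a closed $\mathcal{A}$-submodule $\mathcal{A}_*$ of $\mathcal{A}^*$ such that $\mathcal{A}=(\mathcal{A}_* )^*$. For a Banach $\mathcal{A}$-bimodule $E$, $\sigma wc(E)$ denotes the closed submodule of all $x\in E$ such that the maps $\mathcal{A}\to E$, $a\mapsto a\cdot x$ and $a\mapsto x\cdot a$, are weak$^*$-weak continuous. $\mathcal{A}\hat{\otimes}\mathcal{A}$ is a bimodule via $a\cdot(b\otimes c)=ab\otimes c$, $(b\otimes c)\cdot a=b\otimes ca$, and duals carry the dual module actions. $\pi_{\mathcal{A}}:\mathcal{A}\hat{\otimes}\mathcal{A}\to\mathcal{A}$ is the multiplication map $a\otimes b\mapsto ab$; since $\pi_{\mathcal{A}}^*$ maps $\mathcal{A}_*$ into $\sigma wc((\mathcal{A}\hat{\otimes}\mathcal{A})^* )$, $\pi_{\mathcal{A}}^{**}$ induces a bimodule map $\pi_{\sigma wc}:(\sigma wc((\mathcal{A}\hat{\otimes}\mathcal{A})^* ))^*\to\mathcal{A}$. $\mathcal{A}$ is Connes amenable if there is $M\in(\sigma wc((\mathcal{A}\hat{\otimes}\mathcal{A})^* ))^*$ with $a\cdot M=M\cdot a$ and $a\,\pi_{\sigma wc}(M)=a$ for all $a\in\mathcal{A}$. Let $i_{\mathcal{A}_*}:\mathcal{A}_*\hookrightarrow\mathcal{A}^*$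 be the canonical embedding, so $i_{\mathcal{A}_*}^*:\mathcal{A}^{**}\to\mathcal{A}$. $\mathcal{A}$ is Johnson pseudo-Connes amenable if there is a (not necessarily bounded) net $(m_\alpha)$ in $(\mathcal{A}\hat{\otimes}\mathcal{A})^{**}$ such that $\langle T,a\cdot m_\alpha\rangle=\langle T,m_\alpha\cdot a\rangle$ for all $a\in\mathcal{A}$, $T\in\sigma wc((\mathcal{A}\hat{\otimes}\mathcal{A})^* )$ and all $\alpha$, and $i_{\mathcal{A}_*}^*\pi_{\mathcal{A}}^{**}(m_\alpha)a\to a$ for every $a\in\mathcal{A}$. *)

From mathcomp Require Import all_boot all_order all_algebra.
From mathcomp Require Import complex.
From mathcomp Require Import all_classical all_reals all_analysis.
Import numFieldNormedType.Exports.
Import Order.TTheory GRing.Theory Num.Theory.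

Set Implicit Arguments.
Unset Strict Implicit.
Unset Printing Implicit Defensive.

Local Open Scope ring_scope.

Section DualBanach.
Context {R : realType} {A : completeNormedModType R[i]}.
Variable mul : A -> A -> A.

Definition banach_algebra : Prop :=
  [/\ (forall (k : R[i]) (a b c : A), mul (k *: a + b) c = k *: mul a c + mul b c),
      (forall (k : R[i]) (a b c : A), mul a (k *: b + c) = k *: mul a b + mul a c),
      (forall a b c : A, mul a (mul b c) = mul (mul a b) c) &
      (forall a b : A, `|mul a b| <= `|a| * `|b|)].

Definition is_lin (f : A -> R[i]) : Prop :=
  forall (k : R[i]) (x y : A), f (k *: x + y) = k * f x + f y.

Definition opnorm_le (f : A -> R[i]) (t : R[i]) : Prop :=
  forall x : A, `|f x| <= t * `|x|.

Definition in_dual (f : A -> R[i]) : Prop :=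
  is_lin f /\ exists t, 0 <= t /\ opnorm_le f t.

(* dual module actions on A^*:  <a.f, x> = <f, x a>,  <f.a, x> = <f, a x> *)
Definition dual_lact (a : A) (f : A -> R[i]) : A -> R[i] := fun x => f (mul x a).
Definition dual_ract (f : A -> R[i]) (a : A) : A -> R[i] := fun x => f (mul a x).

(* A_* is a closed A-submodule of A^* and A = (A_* )^* canonically
   (a |-> (f |-> f a) is an isometric isomorphism of A onto (A_* )^* ). *)
Definition dual_banach_algebra (Ast : set (A -> R[i])) : Prop :=
  [/\
      (forall f, Ast f -> in_dual f) /\
      Ast (fun _ => 0) /\
      (forall (k : R[i]) f g, Ast f -> Ast g -> Ast (fun x => k * f x + g x)),
      (forall f, in_dual f ->
         (forall eps : R[i], 0 < eps ->
            exists g, Ast g /\ opnorm_le (fun x => f x - g x) eps) -> Ast f),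
      (forall a f, Ast f -> Ast (dual_lact a f) /\ Ast (dual_ract f a)),
      (* the canonical map A -> (A_* )^* is isometric *)
      (forall (a : A) (eps : R[i]), 0 < eps ->
         exists f, [/\ Ast f, opnorm_le f 1 & `|a| - eps <= `|f a|]) &
      (* ... and onto (A_* )^* *)
      (forall phi : (A -> R[i]) -> R[i],
         (forall (k : R[i]) f g, Ast f -> Ast g ->
             phi (fun x => k * f x + g x) = k * phi f + phi g) ->
         (exists c, 0 <= c /\ forall f t, Ast f -> 0 <= t -> opnorm_le f t ->
             `|phi f| <= c * t) ->
         exists a : A, forall f, Ast f -> phi f = f a)].

(* weak* continuity (topology sigma(A, A_* )) of a map g : A -> C,
   via the basic weak* neighbourhoods of a point x0 *)
Definition wstar_cont (Ast : set (A -> R[i])) (g : A -> R[i]) : Prop :=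
  forall (x0 : A) (eps : R[i]), 0 < eps ->
    exists (n : nat) (fs : 'I_n -> A -> R[i]) (delta : R[i]),
      [/\ (forall j, Ast (fs j)), 0 < delta &
          forall x : A, (forall j, `|fs j x - fs j x0| < delta) ->
                        `|g x - g x0| < eps].

(* ---------- E = (A \hat\otimes A)^* = bounded bilinear forms on A x A ---------- *)
Definition is_bilin (T : A -> A -> R[i]) : Prop :=
  (forall (k : R[i]) (b b' c : A), T (k *: b + b') c = k * T b c + T b' c) /\
  (forall (k : R[i]) (b c c' : A), T b (k *: c + c') = k * T b c + T b c').

Definition bil_norm_le (T : A -> A -> R[i]) (t : R[i]) : Prop :=
  forall b c : A, `|T b c| <= t * `|b| * `|c|.

Definition inE (T : A -> A -> R[i]) : Prop :=
  is_bilin T /\ exists t, 0 <= t /\ bil_norm_le T t.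

(* dual module actions on E:  <a.T, b(x)c> = <T, b(x)ca>,  <T.a, b(x)c> = <T, ab(x)c> *)
Definition lactE (a : A) (T : A -> A -> R[i]) : A -> A -> R[i] :=
  fun b c => T b (mul c a).
Definition ractE (T : A -> A -> R[i]) (a : A) : A -> A -> R[i] :=
  fun b c => T (mul a b) c.

Definition dual_on (S : set (A -> A -> R[i])) (Phi : (A -> A -> R[i]) -> R[i]) : Prop :=
  (forall (k : R[i]) T U, S T -> S U ->
      Phi (fun b c => k * T b c + U b c) = k * Phi T + Phi U) /\
  (exists c, 0 <= c /\ forall T t, S T -> 0 <= t -> bil_norm_le T t ->
      `|Phi T| <= c * t).

(* sigma wc(E): a |-> a.T and a |-> T.a are weak*-weak continuous
   (weak topology of E = sigma(E, E^* ), E^* = dual_on inE) *)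
Definition sigma_wc (Ast : set (A -> R[i])) (T : A -> A -> R[i]) : Prop :=
  inE T /\
  forall Phi, dual_on inE Phi ->
    wstar_cont Ast (fun a => Phi (lactE a T)) /\
    wstar_cont Ast (fun a => Phi (ractE T a)).

Definition pi_star (f : A -> R[i]) : A -> A -> R[i] := fun b c => f (mul b c).

(* Connes amenability:  M in (sigma wc(E))^*, a.M = M.a, a pi_sigmawc(M) = a,
   where pi_sigmawc(M) is the element e of A = (A_* )^* with <f, e> = <pi^* f, M>. *)
Definition connes_amenable (Ast : set (A -> R[i])) : Prop :=
  exists M : (A -> A -> R[i]) -> R[i],
    [/\ dual_on (sigma_wc Ast) M,
        (forall (a : A) T, sigma_wc Ast T -> M (ractE T a) = M (lactE a T)) &
        exists e : A, (forall f, Ast f -> f e = M (pi_star f)) /\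
                      (forall a : A, mul a e = a)].

(* Johnson pseudo-Connes amenability: a net (m_alpha) in E^* = (A \hat\otimes A)^**
   with <T, a.m_alpha> = <T, m_alpha.a> for T in sigma wc(E), and
   i^*_{A_*} pi_A^**(m_alpha) a -> a in norm, where
   e_alpha := i^*_{A_*} pi_A^**(m_alpha) is the element of A with
   <f, e_alpha> = <pi^* f, m_alpha> for all f in A_*. *)
Definition johnson_pseudo_connes_amenable (Ast : set (A -> R[i])) : Prop :=
  exists (I : Type) (le : I -> I -> Prop)
         (m : I -> (A -> A -> R[i]) -> R[i]) (e : I -> A),
    [/\
        inhabited I /\ (forall i, le i i) /\
        (forall i j k, le i j -> le j k -> le i k) /\
        (forall i j, exists k, le i k /\ le j k),
        (forall i, dual_on inE (m i)),
        (forall i (a : A) T, sigma_wc Ast T -> m i (ractE T a) = m i (lactE a T)),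
        (forall i f, Ast f -> f (e i) = m i (pi_star f)) &
        (forall (a : A) (eps : R[i]), 0 < eps ->
           exists i0, forall i, le i0 i -> `|mul (e i) a - a| < eps)].

End DualBanach.

From Pilot Require Import Defs.
From HB Require Import structures.
From mathcomp Require Import all_boot all_order all_algebra.
From mathcomp Require Import complex.
From mathcomp Require Import all_classical all_reals all_analysis.
From mathcomp Require Import ring lra.
Import numFieldNormedType.Exports.
Import Order.TTheory GRing.Theory Num.Theory.
Set Implicit Arguments.
Unset Strict Implicit.
Unset Printing Implicit Defensive.
Local Open Scope ring_scope.
Local Open Scope classical_set_scope.
Local Open Scope complex_scope.

(* Let M be a Connes diagonal and e = pi_swc(M).  The space swc(E) is an
   A-submodule of E = (A (x) A)^* containing pi^*(A_* ), and pi^* intertwines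
   the module actions, so a.M = M.a gives <f, e a> = <f, a e> = <f, a> for all
   f in A_*; since A_* separates A, e is also a left unit.  By Hahn-Banach, M
   extends to some m in E^*, and the constant net m_alpha = m does the job:
   the commutation and pi^** m = e only involve swc(E). *)

Lemma ge0_complex {R : realType} (t : R[i]) :
  0 <= t -> exists2 r : R, t = r%:C & 0 <= r.
Proof.
move=> t0; have tE : (complex.Re t)%:C = t by rewrite RRe_real ?ger0_real.
by exists (complex.Re t); rewrite ?tE // -ler0c tE.
Qed.

Section RealHahnBanach.
Context {R : realType} {V : lmodType R}.
Variables (D S : set V) (p f : V -> R).
Hypotheses (D0 : D 0) (DL : forall r x y, D x -> D y -> D (r *: x + y))
  (SD : S `<=` D) (S0 : S 0) (SL : forall r x y, S x -> S y -> S (r *: x + y))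
  (pD : forall x y, D x -> D y -> p (x + y) <= p x + p y)
  (pZ : forall r x, D x -> 0 < r -> p (r *: x) = r * p x)
  (fL : forall r x y, S x -> S y -> f (r *: x + y) = r * f x + f y)
  (fp : forall x, S x -> f x <= p x).

Let DD x y : D x -> D y -> D (x + y).
Proof. by move=> Dx Dy; have := DL 1 Dx Dy; rewrite scale1r. Qed.

Let DZ r x : D x -> D (r *: x).
Proof. by move=> Dx; have := DL r Dx D0; rewrite addr0. Qed.

Let DB x y : D x -> D y -> D (x - y).
Proof. by move=> Dx Dy; rewrite -scaleN1r; exact/DD/DZ. Qed.

Let f0 : f 0 = 0.
Proof.
have := fL 1 S0 S0; rewrite scale1r mul1r addr0 => f00.
by apply: (addrI (f 0)); rewrite addr0 -f00.
Qed.

(* Partial extensions of [f] are encoded by their graphs. *)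
Definition dominated_graph (G : set (V * R)) :=
  [/\ forall v a b, G (v, a) -> G (v, b) -> a = b,
      forall r v a w b, G (v, a) -> G (w, b) -> G (r *: v + w, r * a + b),
      forall v a, G (v, a) -> D v /\ a <= p v &
      forall v, S v -> G (v, f v)].

Let graph00 G : dominated_graph G -> G (0, 0).
Proof. by case=> _ _ _ /(_ 0 S0); rewrite f0. Qed.

Let graphZ G r v a : dominated_graph G -> G (v, a) -> G (r *: v, r * a).
Proof.
by move=> gG Gva; case: (gG) => _ /(_ r _ _ _ _ Gva (graph00 gG)); rewrite !addr0.
Qed.

Lemma dominated_graph_gap G x : dominated_graph G -> D x ->
  exists y, forall w a, G (w, a) -> a - p (w - x) <= y /\ y <= p (w + x) - a.
Proof.
move=> gG Dx; have [_ Glin Gdom _] := gG.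
have gap w a w' a' : G (w, a) -> G (w', a') -> a - p (w - x) <= p (w' + x) - a'.
  move=> Gw Gw'; have [Dw _] := Gdom _ _ Gw; have [Dw' _] := Gdom _ _ Gw'.
  have := Glin 1 _ _ _ _ Gw Gw'; rewrite scale1r mul1r => /Gdom[_ Gsum].
  have := pD (DB Dw Dx) (DD Dw' Dx).
  by rewrite addrACA addNr addr0; lra.
pose E := [set z | exists w a, G (w, a) /\ z = a - p (w - x)].
have E0 : E (0 - p (0 - x)) by exists 0, 0; split => //; exact: graph00.
have ubE : has_ubound E.
  by exists (p (0 + x) - 0) => z [w [a [Gw ->]]]; exact: gap (graph00 gG).
exists (sup E) => w a Gw; split; first by apply: ub_le_sup => //; exists w, a.
by apply: ge_sup; [exists (0 - p (0 - x)) | move=> z [w' [a' [Gw' ->]]]; exact: gap].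
Qed.

Definition graph_adjoin (G : set (V * R)) x y : set (V * R) :=
  [set va | exists w a r, G (w, a) /\ va = (w + r *: x, a + r * y)].

Let graph_adjoin_le G x y w a r : dominated_graph G -> D x ->
  (forall w a, G (w, a) -> y <= p (w + x) - a) -> 0 < r -> G (w, a) ->
  a + r * y <= p (w + r *: x).
Proof.
move=> gG Dx yub r0 Gw; have [_ _ Gdom _] := gG.
have Gw' := graphZ r^-1 gG Gw; have [Dw' _] := Gdom _ _ Gw'.
have -> : w + r *: x = r *: (r^-1 *: w + x).
  by rewrite scalerDr scalerA mulfV ?gt_eqF // scale1r.
rewrite pZ //; last exact: DD.
have := ler_wpM2l (ltW r0) (yub _ _ Gw').
by rewrite mulrBr mulrA mulfV ?gt_eqF // mul1r; lra.
Qed.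

Lemma dominated_graph_adjoin G x y : dominated_graph G -> D x ->
  ~ (exists a, G (x, a)) ->
  (forall w a, G (w, a) -> a - p (w - x) <= y /\ y <= p (w + x) - a) ->
  dominated_graph (graph_adjoin G x y).
Proof.
move=> gG Dx xG ygap; have [Gfun Glin Gdom Gf] := gG.
split.
- move=> v b1 b2 [w1 [a1 [r1 [G1 [e1 ->]]]]] [w2 [a2 [r2 [G2 [e2 ->]]]]].
  have [?|r12] := eqVneq r1 r2.
    subst r2.
    have ew : w1 = w2 by apply: (addIr (r1 *: x)); rewrite -e1 -e2.
    by rewrite ew in G1; rewrite (Gfun _ _ _ G1 G2).
  have ex : x = (r1 - r2)^-1 *: (- w1 + w2).
    apply: (scalerI (_ : r1 - r2 != 0)); first by rewrite subr_eq0.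
    rewrite scalerA mulfV ?subr_eq0 // scale1r scalerBl.
    by apply: (addrI w1); rewrite addNKr addrA -e1 e2 addrK.
  case: xG; exists ((r1 - r2)^-1 * (- a1 + a2)); rewrite ex.
  by apply: graphZ => //; rewrite -[- w1]scaleN1r -[- a1]mulN1r; exact: Glin.
- move=> r v1 b1 v2 b2 [w1 [a1 [r1 [G1 [-> ->]]]]] [w2 [a2 [r2 [G2 [-> ->]]]]].
  exists (r *: w1 + w2), (r * a1 + a2), (r * r1 + r2); split; first exact: Glin.
  congr (_, _); last by ring.
  by rewrite scalerDr scalerA scalerDl addrACA.
- move=> v b [w [a [r [Gw [-> ->]]]]]; have [Dw pa] := Gdom _ _ Gw.
  split; first by rewrite addrC; exact: DL.
  have [r0|r0|->] := ltgtP r 0; last by rewrite scale0r mul0r !addr0.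
  + have -> : r *: x = (- r) *: (- x) by rewrite scaleNr scalerN opprK.
    rewrite -mulrNN.
    have DNx : D (- x) by rewrite -scaleN1r; exact: DZ.
    apply: (graph_adjoin_le gG); rewrite ?oppr_gt0 // => w' a' /ygap[yl _].
    lra.
  + by apply: (graph_adjoin_le gG) => // w' a' /ygap[].
- by move=> v Sv; exists v, (f v), 0; rewrite scale0r mul0r !addr0; split => //; exact: Gf.
Qed.

Lemma dominated_graph_bigcup (F : set (set (V * R))) :
  F `<=` [set G | G = set0 \/ dominated_graph G] -> total_on F subset ->
  \bigcup_(G in F) G = set0 \/ dominated_graph (\bigcup_(G in F) G).
Proof.
move=> FP Ftot; set U := \bigcup_(G in F) G.
have [U0|/set0P[[v0 a0] [G0 FG0 G0v]]] := eqVneq U set0; [by left | right].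
have dom G va : F G -> G va -> dominated_graph G by move=> /FP[->|].
have both G1 G2 va wb : F G1 -> F G2 -> G1 va -> G2 wb ->
    exists G, [/\ F G, G va, G wb & dominated_graph G].
  move=> FG1 FG2 G1v G2w; have [G12|G21] := Ftot _ _ FG1 FG2.
    by exists G2; split=> //; [exact: G12 | exact: dom FG2 G2w].
  by exists G1; split=> //; [exact: G21 | exact: dom FG1 G1v].
split.
- move=> v a b [G1 FG1 G1a] [G2 FG2 G2b].
  by have [G [_ Ga Gb [Gfun _ _ _]]] := both _ _ _ _ FG1 FG2 G1a G2b; exact: Gfun Ga Gb.
- move=> r v a w b [G1 FG1 G1a] [G2 FG2 G2b].
  have [G [FG Ga Gb [_ Glin _ _]]] := both _ _ _ _ FG1 FG2 G1a G2b.
  by exists G => //; exact: Glin.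
- by move=> v a [G FG Ga]; have [_ _ Gdom _] := dom _ _ FG Ga; exact: Gdom.
- by move=> v Sv; exists G0 => //; have [_ _ _ Gf] := dom _ _ FG0 G0v; exact: Gf.
Qed.

Theorem real_hahn_banach : exists g : V -> R,
  [/\ forall r x y, D x -> D y -> g (r *: x + y) = r * g x + g y,
      forall x, S x -> g x = f x &
      forall x, D x -> g x <= p x].
Proof.
pose fgraph := [set va : V * R | S va.1 /\ va.2 = f va.1].
have fgraph_dom : dominated_graph fgraph.
  split.
  - by move=> v a b [_ /= ->] [_ /= ->].
  - by move=> r v _ w _ [/= Sv ->] [/= Sw ->]; split; [exact: SL | rewrite /= fL].
  - by move=> v a [/= Sv ->]; split; [exact: SD | exact: fp].
  - by move=> v Sv.
(* [set0] is allowed only so that the empty chain has an upper bound. *)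
have [G [[G0|gG] Gmax]] := Zorn_bigcup dominated_graph_bigcup.
  case: (Gmax fgraph); last by right.
  rewrite G0; split; first by [].
  by move=> /(_ (0, f 0) (conj S0 erefl)).
have [Gfun Glin Gdom Gf] := gG.
have Gtot x : D x -> exists a, G (x, a).
  move=> Dx; apply: contrapT => xG.
  have [y ygap] := dominated_graph_gap gG Dx.
  case: (Gmax (graph_adjoin G x y)); last by right; exact: dominated_graph_adjoin.
  split.
    by move=> [w a] Gw; exists w, a, 0; rewrite scale0r mul0r !addr0.
  move=> /(_ (x, y)) Gxy; apply: xG; exists y; apply: Gxy.
  by exists 0, 0, 1; rewrite scale1r mul1r !add0r; split => //; exact: graph00.
pose g x := xget 0 [set a | G (x, a)].
have Gg x : D x -> G (x, g x) by move=> /Gtot; exact: xgetPex.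
exists g; split.
- move=> r x y Dx Dy; apply: (Gfun (r *: x + y)); first by apply: Gg; exact: DL.
  by apply: Glin; exact: Gg.
- by move=> x Sx; apply: (Gfun x); [apply: Gg; exact: SD | exact: Gf].
- by move=> x /Gg /Gdom[].
Qed.

End RealHahnBanach.

Section RealRestriction.
Variables (R : realType) (V : lmodType R[i]).

Definition Rlmod : Type := V.
HB.instance Definition _ := GRing.Zmodule.on Rlmod.

Let Rscale (r : R) (v : Rlmod) : Rlmod := r%:C *: (v : V).

Let RscaleA r s v : Rscale r (Rscale s v) = Rscale (r * s) v.
Proof. by rewrite /Rscale scalerA rmorphM. Qed.

Let Rscale1 : left_id 1 Rscale.
Proof. by move=> v; rewrite /Rscale scale1r. Qed.

Let RscaleDr : right_distributive Rscale +%R.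
Proof. by move=> r v w; rewrite /Rscale scalerDr. Qed.

Let RscaleDl v : {morph Rscale^~ v : r s / r + s}.
Proof. by move=> r s; rewrite /Rscale rmorphD scalerDl. Qed.

HB.instance Definition _ :=
  GRing.Zmodule_isLmodule.Build R Rlmod RscaleA Rscale1 RscaleDr RscaleDl.

End RealRestriction.

Section ComplexHahnBanach.
Context {R : realType} {V : lmodType R[i]}.
Variables (D S : set V) (p : V -> R) (f : V -> R[i]).
Hypotheses (D0 : D 0) (DL : forall k x y, D x -> D y -> D (k *: x + y))
  (SD : S `<=` D) (S0 : S 0) (SL : forall k x y, S x -> S y -> S (k *: x + y))
  (pD : forall x y, D x -> D y -> p (x + y) <= p x + p y)
  (pZ : forall k x, D x -> (p (k *: x))%:C = `|k| * (p x)%:C)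
  (fL : forall k x y, S x -> S y -> f (k *: x + y) = k * f x + f y)
  (fp : forall x, S x -> `|f x| <= (p x)%:C).

Let DZ k x : D x -> D (k *: x).
Proof. by move=> Dx; have := DL k Dx D0; rewrite addr0. Qed.

Let Re_le_norm (z : R[i]) : (complex.Re z)%:C <= `|z|.
Proof. by apply: le_trans (normc_ge_Re z); rewrite lecR; exact: ler_norm. Qed.

Definition complexify (h : V -> R) (v : V) : R[i] := (h v)%:C - 'i * (h ('i *: v))%:C.

Lemma Re_complexify h v : complex.Re (complexify h v) = h v.
Proof. by rewrite /complexify /=; simpc. Qed.

Section Complexify.
Variable h : V -> R.
Hypothesis hL : forall (r : R) x y, D x -> D y -> h (r%:C *: x + y) = r * h x + h y.

Let hD x y : D x -> D y -> h (x + y) = h x + h y.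
Proof. by move=> Dx Dy; have := hL 1 Dx Dy; rewrite rmorph1 scale1r mul1r. Qed.

Let hZ (r : R) x : D x -> h (r%:C *: x) = r * h x.
Proof.
move=> Dx; have h0 : h 0 = 0 by apply: (addrI (h 0)); rewrite addr0 -hD // addr0.
by have := hL r Dx D0; rewrite h0 !addr0.
Qed.

Lemma complexifyD x y : D x -> D y -> complexify h (x + y) = complexify h x + complexify h y.
Proof.
move=> Dx Dy; rewrite /complexify scalerDr (hD Dx Dy) (hD (DZ 'i Dx) (DZ 'i Dy)).
by rewrite !rmorphD; ring.
Qed.

Lemma complexifyZ k x : D x -> complexify h (k *: x) = k * complexify h x.
Proof.
move=> Dx; have Dix := DZ 'i Dx.
have gZr (r : R) y : D y -> complexify h (r%:C *: y) = r%:C * complexify h y.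
  move=> Dy; rewrite /complexify scalerA [_ * r%:C]mulrC -scalerA.
  by rewrite (hZ _ Dy) (hZ _ (DZ 'i Dy)) !rmorphM; ring.
have gi : complexify h ('i *: x) = 'i * complexify h x.
  have hN : h (- x) = - h x.
    by rewrite -scaleN1r -(rmorphN1 (real_complex R)) hZ // mulN1r.
  rewrite /complexify scalerA -expr2 sqrCi scaleN1r hN rmorphN.
  by rewrite mulrBr mulrA -expr2 sqrCi; ring.
rewrite [k]complexE complexiE scalerDl [_ * _%:C]mulrC -scalerA.
by rewrite (complexifyD (DZ _ Dx) (DZ _ Dix)) (gZr _ _ Dx) (gZr _ _ Dix) gi; ring.
Qed.

End Complexify.

Lemma complexify_Re (h : V -> R) x : (forall x, S x -> h x = complex.Re (f x)) -> S x ->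
  complexify h x = f x.
Proof.
move=> hf Sx; have Six : S ('i *: x) by have := SL 'i Sx S0; rewrite addr0.
have f0 : f 0 = 0.
  have := fL 1 S0 S0; rewrite scale1r mul1r addr0 => f00.
  by apply: (addrI (f 0)); rewrite -f00 addr0.
have fi : f ('i *: x) = 'i * f x by have := fL 'i Sx S0; rewrite addr0 f0 addr0.
rewrite /complexify !hf // fi -complexiE [_ * f x]mulrC ReiNIm rmorphN mulrN opprK.
by rewrite [RHS]complexE.
Qed.

Theorem complex_hahn_banach : exists g : V -> R[i],
  [/\ forall k x y, D x -> D y -> g (k *: x + y) = k * g x + g y,
      forall x, S x -> g x = f x &
      forall x, D x -> `|g x| <= (p x)%:C].
Proof.
have pZr (r : R) x : D x -> 0 < r -> p (r%:C *: x) = r * p x.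
  by move=> Dx r0; apply: complexI; rewrite rmorphM pZ // ger0_norm // ler0c ltW.
have fLr r x y : S x -> S y ->
    complex.Re (f (r%:C *: x + y)) = r * complex.Re (f x) + complex.Re (f y).
  by move=> Sx Sy; rewrite fL //; case: (f x) (f y) => [a b] [c d] /=; rewrite mul0r subr0.
have fpr x : S x -> complex.Re (f x) <= p x.
  by move=> Sx; rewrite -lecR; exact: le_trans (Re_le_norm _) (fp Sx).
have [h [hL hf hp]] := @real_hahn_banach R (Rlmod V) D S p (fun x => complex.Re (f x))
  D0 (fun r => DL r%:C) SD S0 (fun r => SL r%:C) pD pZr fLr fpr.
exists (complexify h); split => [k x y Dx Dy|x Sx|x Dx].
- by rewrite (complexifyD hL (DZ k Dx) Dy) (complexifyZ hL).
- exact: complexify_Re.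
(* Rotating [x] by a unimodular [w] makes [complexify h (w x)] real, hence equal to [h (w x)]. *)
have [w [w1 wg]] : exists w, `|w| = 1 /\ w * complexify h x = `|complexify h x|.
  have [->|gx0] := eqVneq (complexify h x) 0; first by exists 1; rewrite normr1 mulr0 normr0.
  exists (`|complexify h x| / complexify h x).
  by rewrite normf_div normr_id mulfV ?normr_eq0 // divfK.
have gwx : complexify h (w *: x) = (h (w *: x))%:C.
  by rewrite -Re_complexify RRe_real // (complexifyZ hL w Dx) wg ger0_real.
rewrite -wg -(complexifyZ hL w Dx) gwx -[(p x)%:C]mul1r -w1 -pZ // lecR.
exact: hp (DZ _ Dx).
Qed.

End ComplexHahnBanach.

Section BoundedBilinearForms.
Context {R : realType} {A : completeNormedModType R[i]}.
Implicit Types (T U : A -> A -> R[i]) (k : R[i]).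

Lemma inE_lin k T U : Defs.inE T -> Defs.inE U -> Defs.inE (k *: T + U).
Proof.
have -> : k *: T + U = (fun b c => k * T b c + U b c) by [].
move=> [[T1 T2] [tT [tT0 bT]]] [[U1 U2] [tU [tU0 bU]]]; split.
  by split=> k' x y z; rewrite ?T1 ?T2 ?U1 ?U2; ring.
exists (`|k| * tT + tU); split; first by rewrite addr_ge0 // mulr_ge0.
move=> b c; apply: le_trans (ler_normD _ _) _; rewrite normrM !mulrDl.
by apply: lerD (bU b c); rewrite -!mulrA ler_wpM2l // !mulrA; exact: bT.
Qed.

Lemma inE0 : Defs.inE (0 : A -> A -> R[i]).
Proof.
split; first by split=> *; rewrite /= mulr0 addr0.
by exists 0; split => // b c; rewrite normr0 !mul0r.
Qed.

Lemma inEZ k T : Defs.inE T -> Defs.inE (k *: T).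
Proof. by move=> iT; rewrite -[_ *: T]addr0; exact: inE_lin iT inE0. Qed.

Definition bil_norm T : R := inf [set t : R | 0 <= t /\ bil_norm_le T t%:C].

Lemma bil_norm_inf_le T t : 0 <= t -> bil_norm_le T t%:C -> bil_norm T <= t.
Proof. by move=> t0 Tt; apply: ge_inf; [exists 0 => z [] | split]. Qed.

Lemma le_bil_norm T (u c : R) : Defs.inE T -> 0 <= c ->
  (forall t, 0 <= t -> bil_norm_le T t%:C -> u <= c * t) -> u <= c * bil_norm T.
Proof.
move=> [_ [t0 [/ge0_complex[t -> t_ge0] Tt]]] c0 ub.
have [c_eq0|c_gt0] := eqVneq c 0; first by have := ub _ t_ge0 Tt; rewrite c_eq0 !mul0r.
have {}c_gt0 : 0 < c by rewrite lt_def c_gt0.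
rewrite mulrC -ler_pdivrMr //; apply: lb_le_inf; first by exists t.
by move=> s [s0 Ts]; rewrite ler_pdivrMr // mulrC; exact: ub.
Qed.

Lemma bil_norm_ge0 T : Defs.inE T -> 0 <= bil_norm T.
Proof.
by move=> [_ [_ [/ge0_complex[t -> t0] Tt]]]; apply: lb_le_inf; [exists t | move=> s []].
Qed.

Lemma bil_norm_leC T t : 0 <= t -> bil_norm_le T t -> (bil_norm T)%:C <= t.
Proof. by move=> /ge0_complex[r -> r0] Tr; rewrite lecR; exact: bil_norm_inf_le. Qed.

Lemma bil_normD T U : Defs.inE T -> Defs.inE U ->
  bil_norm (T + U) <= bil_norm T + bil_norm U.
Proof.
move=> iT iU.
have sum_le tT tU : 0 <= tT -> bil_norm_le T tT%:C -> 0 <= tU -> bil_norm_le U tU%:C ->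
    bil_norm (T + U) <= tT + tU.
  move=> tT0 Tt tU0 Ut; apply: bil_norm_inf_le; first by rewrite addr_ge0.
  move=> b c; rewrite rmorphD !mulrDl.
  exact: le_trans (ler_normD _ _) (lerD (Tt b c) (Ut b c)).
rewrite -lerBlDr -[bil_norm T]mul1r; apply: le_bil_norm => // tT tT0 Tt.
rewrite mul1r lerBlDr [tT + _]addrC -lerBlDr -[bil_norm U]mul1r.
apply: le_bil_norm => // tU tU0 Ut.
by rewrite mul1r lerBlDr [tU + _]addrC; exact: sum_le.
Qed.

Lemma bil_normZ_le k (r : R) T : Defs.inE T -> `|k| = r%:C ->
  bil_norm (k *: T) <= r * bil_norm T.
Proof.
move=> iT kr; have r0 : 0 <= r by rewrite -ler0c -kr.
apply: le_bil_norm => // t t0 Tt; apply: bil_norm_inf_le; first exact: mulr_ge0.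
by move=> b c; rewrite normrM kr rmorphM -!mulrA ler_wpM2l ?ler0c // !mulrA.
Qed.

Lemma bil_normZ k T : Defs.inE T -> (bil_norm (k *: T))%:C = `|k| * (bil_norm T)%:C.
Proof.
move=> iT; have [r kr r0] := ge0_complex (normr_ge0 k); rewrite kr -rmorphM; congr (_%:C).
apply/le_anti/andP; split; first exact: bil_normZ_le.
have [k0|k_neq0] := eqVneq k 0.
  by move: kr; rewrite k0 normr0 => /complexI <-; rewrite mul0r; exact/bil_norm_ge0/inEZ.
have r_gt0 : 0 < r by rewrite lt_def r0 andbT -(inj_eq (@complexI R)) -kr normr_eq0.
rewrite -ler_pdivlMl //; have {1}-> : T = k^-1 *: (k *: T) by rewrite scalerA mulVf // scale1r.
apply: bil_normZ_le; first exact: inEZ.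
by rewrite normfV kr fmorphV.
Qed.

End BoundedBilinearForms.

Section WeakStarContinuity.
Context {R : realType} {A : completeNormedModType R[i]}.
Variable Ast : set (A -> R[i]).
Implicit Types (g h : A -> R[i]).

Lemma wstar_cont_predual g : Ast g -> wstar_cont Ast g.
Proof. by move=> Ag x0 eps eps0; exists 1%N, (fun _ => g), eps; split => // x /(_ ord0). Qed.

Lemma wstar_cont_cst z : wstar_cont Ast (fun _ => z).
Proof.
move=> x0 eps eps0; exists 0%N, (fun _ _ => 0), 1.
by split=> [[]//|//|x _]; rewrite subrr normr0.
Qed.

Lemma wstar_cont_lin k g h : wstar_cont Ast g -> wstar_cont Ast h ->
  wstar_cont Ast (fun x => k * g x + h x).
Proof.
move=> cg ch x0 eps eps0; set e := eps / 2.
have e0 : 0 < e by rewrite divr_gt0.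
have k1 : 0 < `|k| + 1 by rewrite ltr_wpDl.
have [n1 [fs1 [d1 [Afs1 d1_gt0 near_g]]]] := cg x0 _ (divr_gt0 e0 k1).
have [n2 [fs2 [d2 [Afs2 d2_gt0 near_h]]]] := ch x0 _ e0.
pose fs j := match fintype.split j with inl j1 => fs1 j1 | inr j2 => fs2 j2 end.
(* [R[i]] is not totally ordered, so [d] replaces [min d1 d2]. *)
pose d := d1 * d2 / (d1 + d2).
have d12 : 0 < d1 + d2 by rewrite addr_gt0.
have dd1 : d <= d1 by rewrite ler_pdivrMr // ler_pM2l // lerDr ltW.
have dd2 : d <= d2 by rewrite ler_pdivrMr // mulrC ler_pM2l // lerDl ltW.
exists (n1 + n2)%N, fs, d; split; first by move=> j; rewrite /fs; case: fintype.split.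
  by rewrite !divr_gt0 ?mulr_gt0.
move=> x near_x.
have /near_g gx : forall j, `|fs1 j x - fs1 j x0| < d1.
  by move=> j; have := near_x (unsplit (inl j)); rewrite /fs unsplitK => /lt_le_trans; apply.
have /near_h hx : forall j, `|fs2 j x - fs2 j x0| < d2.
  by move=> j; have := near_x (unsplit (inr j)); rewrite /fs unsplitK => /lt_le_trans; apply.
have -> : k * g x + h x - (k * g x0 + h x0) = k * (g x - g x0) + (h x - h x0) by ring.
apply: le_lt_trans (ler_normD _ _) _; rewrite normrM (splitr eps) -/e.
apply: ler_ltD hx; apply: le_trans (ler_wpM2l (normr_ge0 k) (ltW gx)) _.
rewrite mulrCA; apply: ler_piMr; first exact: ltW.
by rewrite ler_pdivrMr // mul1r lerDl.
Qed.

End WeakStarContinuity.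

Section DualBanachAlgebra.
Context {R : realType} {A : completeNormedModType R[i]}.
Variables (mul : A -> A -> A) (Ast : set (A -> R[i])).
Hypotheses (BA : banach_algebra mul) (DB : dual_banach_algebra mul Ast).
Implicit Types (a x : A) (f h : A -> R[i]) (T U : A -> A -> R[i]).

Let mulDl k a b c : mul (k *: a + b) c = k *: mul a c + mul b c.
Proof. by case: BA. Qed.
Let mulDr k a b c : mul a (k *: b + c) = k *: mul a b + mul a c.
Proof. by case: BA. Qed.
Let mulA a b c : mul a (mul b c) = mul (mul a b) c.
Proof. by case: BA. Qed.
Let norm_mul a b : `|mul a b| <= `|a| * `|b|.
Proof. by case: BA. Qed.

Let Ast_dual f : Ast f -> in_dual f.
Proof. by case: DB => [[+ _] _ _ _ _]; apply. Qed.
Let Ast_lact a f : Ast f -> Ast (dual_lact mul a f).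
Proof. by case: DB => [_ _ + _ _] => /(_ a f) h /h[]. Qed.
Let Ast_ract a f : Ast f -> Ast (dual_ract mul f a).
Proof. by case: DB => [_ _ + _ _] => /(_ a f) h /h[]. Qed.

Lemma wstar_cont_mulr h a : wstar_cont Ast h -> wstar_cont Ast (fun x => h (mul x a)).
Proof.
move=> ch x0 eps eps0; have [n [fs [d [Afs d0 near_h]]]] := ch (mul x0 a) eps eps0.
exists n, (fun j => dual_lact mul a (fs j)), d.
by split=> [j|//|x /near_h]; first exact: Ast_lact.
Qed.

Lemma wstar_cont_mull h a : wstar_cont Ast h -> wstar_cont Ast (fun x => h (mul a x)).
Proof.
move=> ch x0 eps eps0; have [n [fs [d [Afs d0 near_h]]]] := ch (mul a x0) eps eps0.
exists n, (fun j => dual_ract mul (fs j) a), d.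
by split=> [j|//|x /near_h]; first exact: Ast_ract.
Qed.

Lemma bil_norm_le_lactE a T t : 0 <= t -> bil_norm_le T t ->
  bil_norm_le (lactE mul a T) (t * `|a|).
Proof.
move=> t0 Tt b c; apply: le_trans (Tt _ _) _.
by rewrite -!mulrA ler_wpM2l // mulrCA ler_wpM2l // mulrC.
Qed.

Lemma bil_norm_le_ractE a T t : 0 <= t -> bil_norm_le T t ->
  bil_norm_le (ractE mul T a) (t * `|a|).
Proof.
move=> t0 Tt b c; apply: le_trans (Tt _ _) _.
by rewrite -!mulrA ler_wpM2l // !mulrA ler_wpM2r.
Qed.

Lemma inE_lactE a T : Defs.inE T -> Defs.inE (lactE mul a T).
Proof.
move=> [[T1 T2] [t [t0 Tt]]]; split.
  by split=> k x y z; rewrite /lactE ?T1 ?mulDl ?T2.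
by exists (t * `|a|); split; [exact: mulr_ge0 | exact: bil_norm_le_lactE].
Qed.

Lemma inE_ractE a T : Defs.inE T -> Defs.inE (ractE mul T a).
Proof.
move=> [[T1 T2] [t [t0 Tt]]]; split.
  by split=> k x y z; rewrite /ractE ?mulDr ?T1 ?T2.
by exists (t * `|a|); split; [exact: mulr_ge0 | exact: bil_norm_le_ractE].
Qed.

Lemma bil_norm_le_pi_star f t : 0 <= t -> opnorm_le f t -> bil_norm_le (pi_star mul f) t.
Proof. by move=> t0 ft b c; apply: le_trans (ft _) _; rewrite -mulrA ler_wpM2l. Qed.

Lemma inE_pi_star f : Ast f -> Defs.inE (pi_star mul f).
Proof.
move=> /Ast_dual[flin [t [t0 ft]]]; split.
  by split=> k x y z; rewrite /pi_star ?mulDl ?mulDr flin.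
by exists t; split => //; exact: bil_norm_le_pi_star.
Qed.

Lemma lactE_pi_star a f : lactE mul a (pi_star mul f) = pi_star mul (dual_lact mul a f).
Proof. by apply/funext => b; apply/funext => c; rewrite /lactE /pi_star /dual_lact mulA. Qed.

Lemma ractE_pi_star a f : ractE mul (pi_star mul f) a = pi_star mul (dual_ract mul f a).
Proof. by apply/funext => b; apply/funext => c; rewrite /ractE /pi_star /dual_ract mulA. Qed.

Lemma dual_on_lactE a Phi : dual_on Defs.inE Phi ->
  dual_on Defs.inE (fun T => Phi (lactE mul a T)).
Proof.
move=> [Phi_lin [c [c0 Phi_bd]]]; split.
  by move=> k T U iT iU; exact: Phi_lin (inE_lactE a iT) (inE_lactE a iU).
exists (c * `|a|); split => [|T t iT t0 Tt]; first exact: mulr_ge0.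
rewrite mulrAC -mulrA; apply: Phi_bd (inE_lactE a iT) _ (bil_norm_le_lactE a t0 Tt).
exact: mulr_ge0.
Qed.

Lemma dual_on_ractE a Phi : dual_on Defs.inE Phi ->
  dual_on Defs.inE (fun T => Phi (ractE mul T a)).
Proof.
move=> [Phi_lin [c [c0 Phi_bd]]]; split.
  by move=> k T U iT iU; exact: Phi_lin (inE_ractE a iT) (inE_ractE a iU).
exists (c * `|a|); split => [|T t iT t0 Tt]; first exact: mulr_ge0.
rewrite mulrAC -mulrA; apply: Phi_bd (inE_ractE a iT) _ (bil_norm_le_ractE a t0 Tt).
exact: mulr_ge0.
Qed.

Lemma sigma_wc_lin k T U : sigma_wc mul Ast T -> sigma_wc mul Ast U ->
  sigma_wc mul Ast (k *: T + U).
Proof.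
move=> [iT wT] [iU wU]; split; first exact: inE_lin.
move=> Phi dPhi; have [Phi_lin _] := dPhi.
have [lT rT] := wT _ dPhi; have [lU rU] := wU _ dPhi; split.
- have -> : (fun a => Phi (lactE mul a (k *: T + U))) =
      (fun a => k * Phi (lactE mul a T) + Phi (lactE mul a U)).
    by apply/funext => a; exact: Phi_lin (inE_lactE a iT) (inE_lactE a iU).
  exact: wstar_cont_lin.
- have -> : (fun a => Phi (ractE mul (k *: T + U) a)) =
      (fun a => k * Phi (ractE mul T a) + Phi (ractE mul U a)).
    by apply/funext => a; exact: Phi_lin (inE_ractE a iT) (inE_ractE a iU).
  exact: wstar_cont_lin.
Qed.

Lemma sigma_wc0 : sigma_wc mul Ast 0.
Proof. by split=> [|Phi _]; [exact: inE0 | split; exact: (wstar_cont_cst _ (Phi 0))]. Qed.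

Lemma sigma_wc_lactE a T : sigma_wc mul Ast T -> sigma_wc mul Ast (lactE mul a T).
Proof.
move=> [iT wT]; split=> [|Phi dPhi]; first exact: inE_lactE.
split; last exact: (wT _ (dual_on_lactE a dPhi)).2.
have -> : (fun b => Phi (lactE mul b (lactE mul a T))) =
    (fun b => Phi (lactE mul (mul b a) T)).
  by apply/funext => b; congr Phi; apply/funext => c; apply/funext => d; rewrite /lactE mulA.
exact: wstar_cont_mulr (wT _ dPhi).1.
Qed.

Lemma sigma_wc_ractE a T : sigma_wc mul Ast T -> sigma_wc mul Ast (ractE mul T a).
Proof.
move=> [iT wT]; split=> [|Phi dPhi]; first exact: inE_ractE.
split; first exact: (wT _ (dual_on_ractE a dPhi)).1.
have -> : (fun b => Phi (ractE mul (ractE mul T a) b)) =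
    (fun b => Phi (ractE mul T (mul a b))).
  by apply/funext => b; congr Phi; apply/funext => c; apply/funext => d; rewrite /ractE mulA.
exact: wstar_cont_mull (wT _ dPhi).2.
Qed.

(* This is where [A = (A_* )^*] is used. *)
Lemma dual_on_pi_star Phi : dual_on Defs.inE Phi ->
  exists x, forall f, Ast f -> Phi (pi_star mul f) = f x.
Proof.
move=> [Phi_lin [c [c0 Phi_bd]]]; case: DB => _ _ _ _; apply.
  by move=> k g h Ag Ah; exact: Phi_lin (inE_pi_star Ag) (inE_pi_star Ah).
exists c; split => // g t Ag t0 gt.
exact: Phi_bd (inE_pi_star Ag) t0 (bil_norm_le_pi_star t0 gt).
Qed.

Lemma sigma_wc_pi_star f : Ast f -> sigma_wc mul Ast (pi_star mul f).
Proof.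
move=> Af; split=> [|Phi /dual_on_pi_star[x Phi_x]]; first exact: inE_pi_star.
split.
- have -> : (fun a => Phi (lactE mul a (pi_star mul f))) = dual_ract mul f x.
    by apply/funext => a; rewrite lactE_pi_star Phi_x //; exact: Ast_lact.
  exact/wstar_cont_predual/Ast_ract.
- have -> : (fun a => Phi (ractE mul (pi_star mul f) a)) = dual_lact mul x f.
    by apply/funext => a; rewrite ractE_pi_star Phi_x //; exact: Ast_ract.
  exact/wstar_cont_predual/Ast_lact.
Qed.

Lemma predual_separates x : (forall f, Ast f -> f x = 0) -> x = 0.
Proof.
move=> fx0; apply/eqP; apply: contraT => x_neq0.
have x2 : 0 < `|x| / 2 by rewrite divr_gt0 ?normr_gt0.
have [_ _ _ iso _] := DB; have [f [Af _]] := iso x _ x2.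
by rewrite (fx0 f Af) normr0 subr_le0 ler_pMr ?normr_gt0 // invf_ge1 // lern1.

Qed.

Lemma sigma_wc_dual_extension M : dual_on (sigma_wc mul Ast) M ->
  exists m, dual_on Defs.inE m /\ forall T, sigma_wc mul Ast T -> m T = M T.
Proof.
move=> [M_lin [_ [/ge0_complex[c -> c0] M_bd]]].
have M_le T : sigma_wc mul Ast T -> `|M T| <= (c * bil_norm T)%:C.
  move=> sT; have [u Mu u0] := ge0_complex (normr_ge0 (M T)); rewrite Mu lecR.
  apply: le_bil_norm c0 _ => [|t t0 Tt]; first exact: sT.1.
  by rewrite -lecR rmorphM -Mu; apply: M_bd; rewrite ?ler0c.
have pD T U : Defs.inE T -> Defs.inE U ->
    c * bil_norm (T + U) <= c * bil_norm T + c * bil_norm U.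
  by move=> iT iU; rewrite -mulrDr ler_wpM2l // bil_normD.
have pZ k T : Defs.inE T -> (c * bil_norm (k *: T))%:C = `|k| * (c * bil_norm T)%:C.
  by move=> iT; rewrite !rmorphM /= bil_normZ // mulrCA.
have [m [m_lin mM m_le]] := @complex_hahn_banach R (A -> A -> R[i]) Defs.inE
  (sigma_wc mul Ast) (fun T => c * bil_norm T) M inE0 (@inE_lin R A)
  (fun T sT => proj1 sT) sigma_wc0 sigma_wc_lin pD pZ M_lin M_le.
exists m; split=> //; split=> //.
exists c%:C; split=> [|T t iT t0 Tt]; first by rewrite ler0c.
by apply: le_trans (m_le _ iT) _; rewrite rmorphM ler_wpM2l ?ler0c // bil_norm_leC.
Qed.


Lemma connes_diagonal_left_unit M e :
  (forall a T, sigma_wc mul Ast T -> M (ractE mul T a) = M (lactE mul a T)) ->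
  (forall f, Ast f -> f e = M (pi_star mul f)) ->
  (forall a, mul a e = a) -> forall a, mul e a = a.
Proof.
move=> Mcomm eM e_right a.
have fea f : Ast f -> f (mul e a) = f a.
  move=> Af; change (dual_lact mul a f e = f a).
  rewrite (eM _ (Ast_lact a Af)) -lactE_pi_star -Mcomm; last exact: sigma_wc_pi_star.
  by rewrite ractE_pi_star -(eM _ (Ast_ract a Af)) /dual_ract e_right.
apply/eqP; rewrite -subr_eq0; apply/eqP/predual_separates => f Af.
have [flin _] := Ast_dual Af.
by rewrite -scaleN1r addrC flin fea // mulN1r addNr.
Qed.

End DualBanachAlgebra.

Theorem lemma2p3 (R : realType) (A : completeNormedModType R[i])
  (mul : A -> A -> A) (Ast : set (A -> R[i])) :
  banach_algebra mul ->
  dual_banach_algebra mul Ast ->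
  connes_amenable mul Ast ->
  johnson_pseudo_connes_amenable mul Ast.
Proof.
move=> BA DB [M [dM Mcomm [e [eM e_right]]]].
have [m [dm mM]] := sigma_wc_dual_extension BA dM.
have e_left := connes_diagonal_left_unit BA DB Mcomm eM e_right.
exists unit, (fun _ _ => True), (fun _ => m), (fun _ => e); split => //.
- move=> _ a T sT; rewrite (mM _ (sigma_wc_ractE BA DB a sT)).
  by rewrite (mM _ (sigma_wc_lactE BA DB a sT)); exact: Mcomm.
- by move=> _ f Af; rewrite (mM _ (sigma_wc_pi_star BA DB Af)); exact: eM.
- by move=> a eps eps0; exists tt => _ _; rewrite e_left subrr normr0.
Qed.
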